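(* Let $\mathcal{P}=[0,1]^n\cap K$ be a polytope, where $K$ is an affine subspace of $\mathbb{R}^n$, with vertex set $V(\mathcal{P})$. For vertices $v,w\in V(\mathcal{P})$ let $g^{(w)}_v:\mathcal{P}\to[0,1]$ be the coefficient of $v$ in the convex decomposition of $p$ induced by the fan triangulation $\mathcal{T}_w$, and let $$f_v(p)=\frac{1}{|V(\mathcal{P})|}\sum_{w\in V(\mathcal{P})}g^{(w)}_v(p).$$ Then each $f_v$ is polynomially bounded on $\mathcal{P}$.
   Context: Let $d=\dim\mathcal{P}$. For a vertex $w$, the fan triangulation $\mathcal{T}_w$ of $\mathcal{P}$ is the subdivision of $\mathcal{P}$ into simplices with disjoint interiors obtained by first triangulating (arbitrarily) each facet of $\mathcal{P}$ not containing $w$ into $(d-1)$-dimensional simplices (when a facet has more than $d$ vertices), and then taking the convex hull of $w$ with each such $(d-1)$-simplex. Each $p\in\mathcal{P}$ lies in some simplex $T$ of $\mathcal{T}_w$ and has a unique representation as a convex combination of the vertices of $T$; assigning coefficient $0$ to vertices of $\mathcal{P}$ not in $T$ gives a convex decomposition of $p$ into vertices of $\mathcal{P}$ (these agree on common faces of simplices), and $g^{(w)}_v(p)$ is the coefficient of $v$ in it. For a partition $[n]=A\sqcup S\sqcup B$, the open face is $F_{A,S,B}=\{p\in[0,1]^n: p_i=0\ (i\in A),\ 0<p_i<1\ (i\in S),\ p_i=1\ (i\in B)\}$. For $T\subseteq[n]$, $p^T=\prod_{i\in T}p_i$, $(1-p)^T=\prod_{i\in T}(1-p_i)$. A function $h:\mathcal{P}\to[0,1]$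 is polynomially bounded on $\mathcal{P}$ if there exist an integer $m\ge0$ and a real $c>0$ such that for every open face $F_{A,S,B}$: if some $q\in\mathcal{P}\cap F_{A,S,B}$ has $h(q)>0$, then $h(p)\ge c\left((1-p)^A p^S(1-p)^S p^B\right)^m$ for all $p\in\mathcal{P}$. *)

From HB Require Import structures.
From mathcomp Require Import all_boot all_order all_algebra.
From mathcomp Require Import classical_sets reals.
Set Implicit Arguments. Unset Strict Implicit. Unset Printing Implicit Defensive.
Import Order.TTheory GRing.Theory Num.Theory.
Local Open Scope ring_scope.

Section Defs.
Variables (R : realType) (n : nat).
Notation pt := 'rV[R]_n.

Definition dotp (c x : pt) : R := \sum_(i < n) c ord0 i * x ord0 i.

Definition affine_subspace (K : set pt) : Prop :=
  forall x y (t : R), K x -> K y -> K ((1 - t) *: x + t *: y).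

Definition cube_cap (K : set pt) : set pt :=
  fun p => (forall i, 0 <= p ord0 i <= 1) /\ K p.

Definition is_vertex (X : set pt) (v : pt) : Prop :=
  X v /\ forall x y (t : R), X x -> X y -> 0 < t < 1 ->
    v = (1 - t) *: x + t *: y -> x = y.

Definition aff_indep (s : seq pt) : Prop :=
  uniq s /\ forall lam : pt -> R,
    \sum_(x <- s) lam x *: x = 0 -> \sum_(x <- s) lam x = 0 ->
    forall x, x \in s -> lam x = 0.

(* X has (affine) dimension k (k = -1 for the empty set). *)
Definition has_dim (X : set pt) (k : int) : Prop :=
  (exists s, (forall x, x \in s -> X x) /\ aff_indep s /\ (size s)%:Z = k + 1) /\
  (forall s, (forall x, x \in s -> X x) -> aff_indep s -> (size s)%:Z <= k + 1).

(* F is a face of X: the intersection of X with a supporting hyperplane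
   (c = 0 allowed, giving X itself and the empty face). *)
Definition is_face (X F : set pt) : Prop :=
  exists (c : pt) (b : R), (forall x, X x -> dotp c x <= b) /\
    (forall x, F x <-> X x /\ dotp c x = b).

Definition is_facet (X : set pt) (d : int) (F : set pt) : Prop :=
  is_face X F /\ has_dim F (d - 1).

Definition in_conv (s : seq pt) (x : pt) : Prop :=
  exists lam : pt -> R, (forall y, y \in s -> 0 <= lam y) /\
    \sum_(y <- s) lam y = 1 /\ x = \sum_(y <- s) lam y *: y.

Definition in_relint (s : seq pt) (x : pt) : Prop :=
  exists lam : pt -> R, (forall y, y \in s -> 0 < lam y) /\
    \sum_(y <- s) lam y = 1 /\ x = \sum_(y <- s) lam y *: y.

Definition is_triangulation (X : set pt) (V : seq pt) (d : int) (F : set pt)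
  (Tr : seq (seq pt)) : Prop :=
  [/\ forall S, S \in Tr ->
        [/\ aff_indep S, (size S)%:Z = d & forall y, y \in S -> y \in V /\ F y],
      forall x, F x <-> exists2 S, S \in Tr & in_conv S x
    & forall S S', S \in Tr -> S' \in Tr -> S != S' ->
        forall x, ~ (in_relint S x /\ in_relint S' x)].

(* gw : v -> p -> coefficient is the convex decomposition induced by the fan
   triangulation T_w, for some choice Tri of triangulations of the facets of X
   not containing w. *)
Definition fan_decomposition (X : set pt) (V : seq pt) (d : int) (w : pt)
  (gw : pt -> pt -> R) : Prop :=
  exists Tri : set pt -> seq (seq pt),
    (forall F, is_facet X d F -> ~ F w -> is_triangulation X V d F (Tri F)) /\
    forall p, X p ->
      exists F, [/\ is_facet X d F, ~ F w &
        exists2 S, S \in Tri F &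
          exists lam : pt -> R,
            [/\ forall y, y \in w :: S -> 0 <= lam y,
                \sum_(y <- w :: S) lam y = 1,
                p = \sum_(y <- w :: S) lam y *: y &
                forall v, v \in V -> gw v p = if v \in w :: S then lam v else 0]].

Definition partition3 (A S B : {set 'I_n}) : Prop :=
  [/\ [disjoint A & S], [disjoint A & B], [disjoint S & B] & A :|: S :|: B = [set: 'I_n]%SET].

Definition in_open_face (A S B : {set 'I_n}) (p : pt) : Prop :=
  forall i, [/\ i \in A -> p ord0 i = 0, i \in S -> 0 < p ord0 i < 1
              & i \in B -> p ord0 i = 1].

Definition face_monomial (A S B : {set 'I_n}) (p : pt) : R :=
  (\prod_(i in A) (1 - p ord0 i)) * (\prod_(i in S) p ord0 i) *
  (\prod_(i in S) (1 - p ord0 i)) * (\prod_(i in B) p ord0 i).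

Definition poly_bounded (X : set pt) (h : pt -> R) : Prop :=
  exists (m : nat) (c : R), 0 < c /\
    forall A S B : {set 'I_n}, partition3 A S B ->
      (exists q, [/\ X q, in_open_face A S B q & 0 < h q]) ->
      forall p, X p -> c * (face_monomial A S B p) ^+ m <= h p.

End Defs.

(* Take m = 1 and c = 1/|V|.  If f_v(q) > 0 for a point q of the open face
   F_{A,S,B}, then some g^(w)_v(q) > 0: v carries positive weight in a convex
   combination of vertices equal to q, so v lies in the closed cube face of q,
   i.e. v_i = 0 on A and v_i = 1 on B.  It remains to bound the monomial at p
   by lambda = g^(v)_v(p) <= |V| f_v(p).  The fan triangulation from v writes
   p = lambda v + (1 - lambda) a with a on a facet {c.x = b} of P avoiding v.
   Some coordinate satisfies a_i = 0 < v_i or a_i = 1 > v_i: otherwise the ray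
   from v through a could be prolonged past a inside the cube and K, leaving
   the half-space c.x <= b.  Then p_i <= lambda (resp. 1 - p_i <= lambda), and
   i is outside A (resp. B), so p_i (resp. 1 - p_i) is a factor of the
   monomial. *)

From HB Require Import structures.
From mathcomp Require Import all_boot all_order all_algebra.
From mathcomp Require Import classical_sets reals.
From mathcomp Require Import ring lra.
Set Implicit Arguments. Unset Strict Implicit. Unset Printing Implicit Defensive.
Import Order.TTheory GRing.Theory Num.Theory.
Local Open Scope ring_scope.

Section NonnegBigops.
Variables (R : numDomainType) (I : eqType).

Lemma ler_sum_term (r : seq I) (F : I -> R) j :
  j \in r -> (forall i, i \in r -> 0 <= F i) -> F j <= \sum_(i <- r) F i.
Proof.
move=> rj F_ge0; rewrite (big_rem j) //= lerDl big_seq sumr_ge0 // => i.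
by move=> /mem_rem; apply: F_ge0.
Qed.

Lemma prodr_le_factor (r : seq I) (P : pred I) (F : I -> R) j :
  j \in r -> P j -> (forall i, i \in r -> P i -> 0 <= F i <= 1) ->
  \prod_(i <- r | P i) F i <= F j.
Proof.
move=> rj Pj F01; rewrite big_seq_cond (big_rem j) //= rj Pj.
have /andP[Fj_ge0 _] := F01 j rj Pj.
by rewrite ler_piMr // prodr_ile1 // => i /andP[ri Pi]; apply: F01.
Qed.

Lemma prodr_in01 (r : seq I) (P : pred I) (F : I -> R) :
  (forall i, P i -> 0 <= F i <= 1) -> 0 <= \prod_(i <- r | P i) F i <= 1.
Proof. by move=> F01; rewrite prodr_ile1 // andbT prodr_ge0 // => i /F01 /andP[]. Qed.

End NonnegBigops.

Section UnitCube.
Variables (R : realType) (n : nat).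
Implicit Types (c x y : 'rV[R]_n) (s : seq 'rV[R]_n) (mu : 'rV[R]_n -> R).

Definition in_unit_cube x := forall i, 0 <= x ord0 i <= 1.

Lemma dotpD c x y : dotp c (x + y) = dotp c x + dotp c y.
Proof. by rewrite /dotp -big_split; apply: eq_bigr => i _; rewrite mxE mulrDr. Qed.

Lemma dotpZ c a x : dotp c (a *: x) = a * dotp c x.
Proof. by rewrite /dotp mulr_sumr; apply: eq_bigr => i _; rewrite mxE mulrCA. Qed.

Lemma dotp_sum c s mu :
  dotp c (\sum_(y <- s) mu y *: y) = \sum_(y <- s) mu y * dotp c y.
Proof.
rewrite /dotp (eq_bigr (fun i => \sum_(y <- s) mu y * (c ord0 i * y ord0 i))).
  by rewrite exchange_big; apply: eq_bigr => y _; rewrite mulr_sumr.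
by move=> i _; rewrite summxE mulr_sumr; apply: eq_bigr => y _; rewrite mxE mulrCA.
Qed.

Lemma coord_sum s mu i :
  (\sum_(y <- s) mu y *: y) ord0 i = \sum_(y <- s) mu y * y ord0 i.
Proof. by rewrite summxE; apply: eq_bigr => y _; rewrite mxE. Qed.

Section ConvexCombination.
Variables (s : seq 'rV[R]_n) (mu : 'rV[R]_n -> R).
Hypotheses (s_cube : forall y, y \in s -> in_unit_cube y)
  (mu_ge0 : forall y, y \in s -> 0 <= mu y) (mu_sum1 : \sum_(y <- s) mu y = 1).

Lemma conv_in_unit_cube : in_unit_cube (\sum_(y <- s) mu y *: y).
Proof.
move=> i; rewrite coord_sum; apply/andP; split.
  rewrite big_seq sumr_ge0 // => y sy.
  by have /andP[yi_ge0 _] := s_cube sy i; rewrite mulr_ge0 ?mu_ge0.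
rewrite -mu_sum1 big_seq [leRHS]big_seq ler_sum // => y sy.
by have /andP[_ yi_le1] := s_cube sy i; rewrite ler_piMr ?mu_ge0.
Qed.

Lemma conv_weight_pos_cube_face v i :
  v \in s -> 0 < mu v ->
  ((\sum_(y <- s) mu y *: y) ord0 i = 0 -> v ord0 i = 0) /\
  ((\sum_(y <- s) mu y *: y) ord0 i = 1 -> v ord0 i = 1).
Proof.
move=> sv mu_v_gt0; set x := \sum_(y <- s) mu y *: y.
have /andP[vi_ge0 vi_le1] := s_cube sv i; split=> [xi0|xi1].
  have : mu v * v ord0 i <= x ord0 i.
    rewrite coord_sum; apply: ler_sum_term (sv) _ => y sy.
    by have /andP[? _] := s_cube sy i; rewrite mulr_ge0 ?mu_ge0.
  rewrite xi0; nra.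
have : mu v * (1 - v ord0 i) <= 1 - x ord0 i.
  have -> : 1 - x ord0 i = \sum_(y <- s) mu y * (1 - y ord0 i).
    by rewrite coord_sum -{1}mu_sum1 -sumrB; apply: eq_bigr => y _; rewrite mulrBr mulr1.
  apply: ler_sum_term (sv) _ => y sy.
  by have /andP[_ ?] := s_cube sy i; rewrite mulr_ge0 ?mu_ge0 ?subr_ge0.
rewrite xi1; nra.
Qed.

End ConvexCombination.

Lemma unit_cube_extend_past x y :
  in_unit_cube x -> in_unit_cube y ->
  (forall i, (y ord0 i = 0 -> x ord0 i = 0) /\ (y ord0 i = 1 -> x ord0 i = 1)) ->
  exists2 eps : R, 0 < eps & in_unit_cube ((1 - (1 + eps)) *: x + (1 + eps) *: y).
Proof.
move=> x_cube y_cube y_face.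
pose room i := if 0 < y ord0 i < 1 then Num.min (y ord0 i) (1 - y ord0 i) else 1.
have room01 i : 0 < room i <= 1.
  rewrite /room; case: ifP => [/andP[yi_gt0 yi_lt1]|_]; last by rewrite ltr01 lexx.
  by rewrite lt_min yi_gt0 subr_gt0 yi_lt1 /= ge_min (ltW yi_lt1).
exists (\prod_i room i); first by apply: prodr_gt0 => i _; case/andP: (room01 i).
move=> i; rewrite !mxE.
have : \prod_j room j <= room i.
  apply: prodr_le_factor; rewrite ?mem_index_enum // => j _ _.
  by have /andP[/ltW -> ->] := room01 j.
have eps_gt0 : 0 < \prod_j room j by apply: prodr_gt0 => j _; case/andP: (room01 j).
move: (\prod_j room j) eps_gt0 => eps eps_gt0.
have /andP[xi_ge0 xi_le1] := x_cube i; have /andP[yi_ge0 yi_le1] := y_cube i.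
have [yi_face0 yi_face1] := y_face i.
rewrite /room; case: ifP => [/andP[yi_gt0 yi_lt1]|yi_bd].
  rewrite le_min => /andP[eps_le_y eps_le_1y]; apply/andP; split; nra.
have [yi0|yi1] : y ord0 i = 0 \/ y ord0 i = 1.
  move: yi_bd; rewrite !lt_neqAle yi_ge0 yi_le1 !andbT => /negbT.
  by rewrite negb_and !negbK => /orP[/eqP|/eqP]; [left|right].
- by rewrite yi0 (yi_face0 yi0) => _; apply/andP; split; lra.
- by rewrite yi1 (yi_face1 yi1) => _; apply/andP; split; lra.
Qed.

Lemma exists_tight_coord (K : set 'rV[R]_n) c (b : R) v a :
  affine_subspace K -> (forall x, cube_cap K x -> dotp c x <= b) ->
  cube_cap K v -> cube_cap K a -> dotp c a = b -> dotp c v < b ->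
  exists i, (a ord0 i = 0 /\ 0 < v ord0 i) \/ (a ord0 i = 1 /\ v ord0 i < 1).
Proof.
move=> K_aff c_le [v_cube Kv] [a_cube Ka] ca_eq cv_lt.
have [/existsP[i /orP[/andP[/eqP ai0 vi_gt0]|/andP[/eqP ai1 vi_lt1]]]|/existsPn a_off] :=
  boolP [exists i, ((a ord0 i == 0) && (0 < v ord0 i)) ||
                   ((a ord0 i == 1) && (v ord0 i < 1))].
- by exists i; left.
- by exists i; right.
have [eps eps_gt0 z_cube] : exists2 eps : R, 0 < eps &
    in_unit_cube ((1 - (1 + eps)) *: v + (1 + eps) *: a).
  apply: unit_cube_extend_past => // i; have /andP[vi_ge0 vi_le1] := v_cube i.
  split=> [ai0|ai1]; apply/eqP; rewrite eq_le ?vi_ge0 ?vi_le1 ?andbT /= leNgt.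
    by move: (a_off i); rewrite ai0 eqxx /=; case: (0 < v ord0 i).
  by move: (a_off i); rewrite ai1 eqxx /=; case: (v ord0 i < 1); rewrite ?orbT.
have := c_le _ (conj z_cube (K_aff _ _ _ Kv Ka)).
rewrite dotpD !dotpZ ca_eq; nra.
Qed.

End UnitCube.

Section FaceMonomial.
Variables (R : realType) (n : nat) (A S B : {set 'I_n}) (p : 'rV[R]_n).
Hypothesis p_cube : in_unit_cube p.

Let factors := [:: \prod_(i in A) (1 - p ord0 i); \prod_(i in S) p ord0 i;
                   \prod_(i in S) (1 - p ord0 i); \prod_(i in B) p ord0 i].

Let coord_01 i : 0 <= p ord0 i <= 1 /\ 0 <= 1 - p ord0 i <= 1.
Proof. by have /andP[? ?] := p_cube i; split; apply/andP; split; lra. Qed.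

Let factors_01 f : f \in factors -> 0 <= f <= 1.
Proof.
by rewrite !inE => /or4P[] /eqP ->; apply: prodr_in01 => i _; case: (coord_01 i).
Qed.

Let face_monomial_le_factors :
  [/\ face_monomial A S B p <= \prod_(i in A) (1 - p ord0 i),
      face_monomial A S B p <= \prod_(i in S) p ord0 i,
      face_monomial A S B p <= \prod_(i in S) (1 - p ord0 i)
    & face_monomial A S B p <= \prod_(i in B) p ord0 i].
Proof.
have -> : face_monomial A S B p = \prod_(f <- factors) f.
  by rewrite /factors !big_cons big_nil mulr1 !mulrA.
by split; apply: prodr_le_factor; rewrite ?inE ?eqxx ?orbT // => f /factors_01.
Qed.

Let prod_le_coord (X : {set 'I_n}) (F : 'I_n -> R) i :
  i \in X -> (forall j, 0 <= F j <= 1) -> \prod_(j in X) F j <= F i.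
Proof. by move=> iX F01; apply: prodr_le_factor; rewrite ?mem_index_enum. Qed.

Lemma face_monomial_le1 : face_monomial A S B p <= 1.
Proof.
have [fmA _ _ _] := face_monomial_le_factors; apply: le_trans fmA _.
by case/andP: (factors_01 (mem_head _ _)).
Qed.

Lemma face_monomial_le_coord i : i \in S :|: B -> face_monomial A S B p <= p ord0 i.
Proof.
have [_ fmS _ fmB] := face_monomial_le_factors.
rewrite inE => /orP[iX|iX]; [apply: le_trans fmS _|apply: le_trans fmB _];
  by apply: prod_le_coord => // j; case: (coord_01 j).
Qed.

Lemma face_monomial_le_1Bcoord i :
  i \in A :|: S -> face_monomial A S B p <= 1 - p ord0 i.
Proof.
have [fmA _ fmS _] := face_monomial_le_factors.
rewrite inE => /orP[iX|iX]; [apply: le_trans fmA _|apply: le_trans fmS _];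
  by apply: prod_le_coord => // j; case: (coord_01 j).
Qed.

End FaceMonomial.

Section FanTriangulation.
Variables (R : realType) (n : nat) (K : set 'rV[R]_n) (V : seq 'rV[R]_n) (d : int).
Hypotheses (K_aff : affine_subspace K) (V_cube : forall y, y \in V -> cube_cap K y).
Local Notation P := (cube_cap K).

Lemma fan_decomposition_at w gw p :
  fan_decomposition P V d w gw -> P p ->
  exists F s (lam : 'rV[R]_n -> R),
    [/\ is_facet P d F, ~ F w, forall y, y \in s -> y \in V /\ F y,
        [/\ forall y, y \in w :: s -> 0 <= lam y, \sum_(y <- w :: s) lam y = 1
          & p = \sum_(y <- w :: s) lam y *: y]
      & forall v, v \in V -> gw v p = if v \in w :: s then lam v else 0].
Proof.
move=> [Tri [Tri_ok dec]] Pp.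
have [F [facetF Fw [s Tri_s [lam [lam_ge0 lam_sum p_eq gw_eq]]]]] := dec p Pp.
have [simplices _ _] := Tri_ok F facetF Fw.
by exists F, s, lam; split=> //; have [_ _] := simplices s Tri_s.
Qed.

Lemma fan_coef_ge0 w gw v p :
  fan_decomposition P V d w gw -> v \in V -> P p -> 0 <= gw v p.
Proof.
move=> fan Vv Pp.
have [F [s [lam [_ _ _ [lam_ge0 _ _] gw_eq]]]] := fan_decomposition_at fan Pp.
by rewrite gw_eq //; case: ifP => // /lam_ge0.
Qed.

Lemma fan_coef_pos_cube_face w gw v q :
  w \in V -> fan_decomposition P V d w gw -> v \in V -> P q -> 0 < gw v q ->
  forall i, (q ord0 i = 0 -> v ord0 i = 0) /\ (q ord0 i = 1 -> v ord0 i = 1).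
Proof.
move=> Vw fan Vv Pq.
have [F [s [lam [_ _ s_VF [lam_ge0 lam_sum q_eq] ->//]]]] := fan_decomposition_at fan Pq.
case: ifP => [ws_v lam_v_gt0 i|_]; last by rewrite ltxx.
rewrite q_eq; apply: conv_weight_pos_cube_face => // y.
by rewrite inE => /orP[/eqP ->|/s_VF[/V_cube[]]] //; case: (V_cube Vw).
Qed.

Lemma fan_apex_split w gw p :
  w \in V -> fan_decomposition P V d w gw -> P p -> gw w p != 1 ->
  exists a c b, [/\ P a, forall x, P x -> dotp c x <= b, dotp c a = b,
    dotp c w < b & p = gw w p *: w + (1 - gw w p) *: a].
Proof.
move=> Vw fan Pp.
have [F [s [lam [[[c [b [c_le F_eq]]] _] Fw s_VF [lam_ge0 lam_sum p_eq] gw_eq]]]] :=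
  fan_decomposition_at fan Pp.
rewrite gw_eq ?mem_head //; set l := lam w => l_neq1.
have sum_s : \sum_(y <- s) lam y = 1 - l by rewrite -lam_sum big_cons addrC addKr.
have l_lt1 : l < 1.
  rewrite lt_neqAle l_neq1 -subr_ge0 -sum_s big_seq sumr_ge0 // => y sy.
  by rewrite lam_ge0 // inE sy orbT.
have l1_neq0 : 1 - l != 0 by rewrite subr_eq0 eq_sym.
have mu_sum1 : \sum_(y <- s) lam y / (1 - l) = 1 by rewrite -mulr_suml sum_s divff.
pose a := \sum_(y <- s) (lam y / (1 - l)) *: y.
have p_split : p = l *: w + (1 - l) *: a.
  rewrite p_eq big_cons /a scaler_sumr; congr (_ + _); apply: eq_bigr => y _.
  by rewrite scalerA mulrCA divff ?mulr1.
have a_cube : in_unit_cube a.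
  apply: conv_in_unit_cube => [y /s_VF[/V_cube[]]//|y sy|] //.
  by apply: divr_ge0; [apply: lam_ge0; rewrite inE sy orbT|rewrite subr_ge0 ltW].
have Ka : K a.
  have -> : a = (1 - (1 - l)^-1) *: w + (1 - l)^-1 *: p.
    by apply/rowP => j; rewrite p_split !mxE; field.
  by apply: K_aff; [case: (V_cube Vw)|case: Pp].
exists a, c, b; split=> //.
- transitivity ((\sum_(y <- s) lam y / (1 - l)) * b); last by rewrite mu_sum1 mul1r.
  rewrite /a dotp_sum mulr_suml big_seq [RHS]big_seq; apply: eq_bigr => y sy.
  by have [_ /F_eq[_ ->]] := s_VF y sy.
- rewrite lt_neqAle c_le ?andbT; last exact: V_cube.
  by apply/eqP => cw; apply: Fw; apply/F_eq; split=> //; exact: V_cube.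
Qed.

Lemma fan_apex_coef_tight_coord w gw p :
  w \in V -> fan_decomposition P V d w gw -> P p -> gw w p != 1 ->
  exists i, (0 < w ord0 i /\ p ord0 i <= gw w p) \/
            (w ord0 i < 1 /\ 1 - p ord0 i <= gw w p).
Proof.
move=> Vw fan Pp gw_neq1; have gw_ge0 := fan_coef_ge0 fan Vw Pp.
have [a [c [b [Pa c_le ca_eq cw_lt p_split]]]] := fan_apex_split Vw fan Pp gw_neq1.
have [i a_tight] := exists_tight_coord K_aff c_le (V_cube Vw) Pa ca_eq cw_lt.
have [/(_ i)/andP[wi_ge0 wi_le1] _] := V_cube Vw.
have pi : p ord0 i = gw w p * w ord0 i + (1 - gw w p) * a ord0 i.
  by rewrite {1}p_split !mxE.
by exists i; rewrite pi; case: a_tight => [[-> ?]|[-> ?]]; [left|right]; split=> //; nra.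
Qed.

Lemma face_monomial_le_fan_apex_coef w gw (A S B : {set 'I_n}) p :
  w \in V -> fan_decomposition P V d w gw -> partition3 A S B ->
  (forall i, i \in A -> w ord0 i = 0) -> (forall i, i \in B -> w ord0 i = 1) ->
  P p -> face_monomial A S B p <= gw w p.
Proof.
move=> Vw fan [_ _ _ ASB_cover] wA wB Pp; have [p_cube _] := Pp.
have [->|gw_neq1] := eqVneq (gw w p) 1; first exact: face_monomial_le1.
have i_in j : j \in A :|: S :|: B by rewrite ASB_cover inE.
have [i [[wi_gt0 pi_le]|[wi_lt1 pi_le]]] := fan_apex_coef_tight_coord Vw fan Pp gw_neq1;
  apply: le_trans pi_le.
- have iA : i \notin A by apply: contraTN wi_gt0 => /wA ->; rewrite ltxx.
  by apply: face_monomial_le_coord => //; move: (i_in i); rewrite !inE (negbTE iA).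
- have iB : i \notin B by apply: contraTN wi_lt1 => /wB ->; rewrite ltxx.
  by apply: face_monomial_le_1Bcoord => //; move: (i_in i); rewrite !inE (negbTE iB) orbF.
Qed.

End FanTriangulation.

Theorem lemma14 (R : realType) (n : nat) (K : set 'rV[R]_n)
  (V : seq 'rV[R]_n) (d : int) (g : 'rV[R]_n -> 'rV[R]_n -> 'rV[R]_n -> R) :
  affine_subspace K ->
  uniq V ->
  (forall v, v \in V <-> is_vertex (cube_cap K) v) ->
  has_dim (cube_cap K) d ->
  (forall w, w \in V -> fan_decomposition (cube_cap K) V d w (g w)) ->
  forall v, v \in V ->
    poly_bounded (cube_cap K)
      (fun p => (size V)%:R^-1 * \sum_(w <- V) g w v p).
Proof.
move=> K_aff _ V_vertex _ fan v Vv.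
have V_cube y : y \in V -> cube_cap K y by move=> /V_vertex[].
have V_gt0 : 0 < (size V)%:R :> R by rewrite ltr0n; case: (V) Vv.
exists 1%N, (size V)%:R^-1; split=> [|A S B ASB [q [Pq q_face fq_gt0]] p Pp].
  by rewrite invr_gt0.
rewrite expr1 ler_pM2l ?invr_gt0 //.
have [w Vw gwq_gt0] : exists2 w, w \in V & 0 < g w v q.
  apply/hasP; apply: contraTT fq_gt0 => /hasPn g_le0.
  rewrite -leNgt pmulr_rle0 ?invr_gt0 // big_seq sumr_le0 // => w /g_le0.
  by rewrite -leNgt.
have v_face := fan_coef_pos_cube_face V_cube Vw (fan w Vw) Vv Pq gwq_gt0.
have vA i : i \in A -> v ord0 i = 0 by have [qA _ _] := q_face i; move=> /qA /(v_face i).1.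
have vB i : i \in B -> v ord0 i = 1 by have [_ _ qB] := q_face i; move=> /qB /(v_face i).2.
apply: le_trans (face_monomial_le_fan_apex_coef K_aff V_cube Vv (fan v Vv) ASB vA vB Pp) _.
by apply: ler_sum_term => // w' Vw'; apply: fan_coef_ge0 (fan w' Vw') Vv Pp.
Qed.
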